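(* Let $A$ be a locally uniformly convex normed vector space over $\mathbb C$ and give $A^\vee$ the dual norm. Then on $\mathrm{Max}\,A$ the lower Vietoris topology coincides with the topology generated by the sets $\{V\in\mathrm{Max}\,A: d(\phi,F(V))>r\}$, $\phi\in A^\vee$, $r>0$.
   Context: $\mathrm{Max}\,A$ is the set of closed subspaces of $A$; its lower Vietoris topology is generated by $\{V:V\cap U\ne\emptyset\}$, $U\subset A$ open. $F(V)=\{\phi\in A^\vee:\phi|_V=0\}$ and $d$ is the distance in the dual norm. $A$ is locally uniformly convex if for all $a\in A$ and sequences $(a_n)$ in $A$, $\lim(2\|a\|^2+2\|a_n\|^2-\|a+a_n\|^2)=0$ implies $\lim\|a-a_n\|=0$. *)

From HB Require Import structures.
From mathcomp Require Import all_boot all_order all_algebra.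
From mathcomp Require Import complex.
From mathcomp Require Import all_classical all_reals all_analysis.
Import numFieldTopology.Exports numFieldNormedType.Exports.
Import Order.TTheory GRing.Theory Num.Theory.

Set Implicit Arguments.
Unset Strict Implicit.
Unset Printing Implicit Defensive.

Local Open Scope classical_set_scope.
Local Open Scope ring_scope.

Definition Cx (R : realType) : numClosedFieldType := R[i].

Definition is_topology (T : Type) (O : set (set T)) : Prop :=
  O setT /\
  (forall U V, O U -> O V -> O (U `&` V)) /\
  (forall F : set (set T), F `<=` O -> O (\bigcup_(U in F) U)).

Definition generated_topology (T : Type) (S : set (set T)) : set (set T) :=
  [set U | forall O, is_topology O -> S `<=` O -> O U].

Section Defs.
Variables (R : realType) (A : normedModType R[i]).

Definition locally_uniformly_convex : Prop :=
  forall (a : A) (u : nat -> A),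
    (fun n => (2 * `|a| ^+ 2 + 2 * `|u n| ^+ 2 - `|a + u n| ^+ 2 : Cx R))
      @ \oo --> (0 : Cx R) ->
    (fun n => (`|a - u n| : Cx R)) @ \oo --> (0 : Cx R).

Definition is_dual (phi : A -> Cx R) : Prop :=
  (forall a b : A, phi (a + b) = phi a + phi b) /\
  (forall (c : R[i]) (a : A), phi (c *: a) = c * phi a) /\
  continuous phi.

(* Dual norm (norms are real, so we take real parts to land in R). *)
Definition dual_norm (phi : A -> Cx R) : \bar R :=
  ereal_sup [set (complex.Re (`|phi a| : R[i]))%:E | a in [set a : A | `|a| <= 1]].

(* F(V) = annihilator of V in A^\vee. *)
Definition annihilator (V : set A) : set (A -> Cx R) :=
  [set psi | is_dual psi /\ (forall v, V v -> psi v = 0)].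

Definition dual_dist (phi : A -> Cx R) (W : set (A -> Cx R)) : \bar R :=
  ereal_inf [set dual_norm (fun a => phi a - psi a) | psi in W].

Definition closed_subspace (V : set A) : Prop :=
  closed V /\ V 0 /\
  (forall u v, V u -> V v -> V (u + v)) /\
  (forall (c : R[i]) u, V u -> V (c *: u)).

Definition MaxA := {V : set A | closed_subspace V}.

Definition lower_vietoris_subbasis : set (set MaxA) :=
  [set S | exists U : set A, open U /\
           S = [set V : MaxA | (proj1_sig V `&` U) !=set0]].

Definition dual_dist_subbasis : set (set MaxA) :=
  [set S | exists (phi : A -> Cx R) (r : R), is_dual phi /\ 0 < r /\
           S = [set V : MaxA | (r%:E < dual_dist phi (annihilator (proj1_sig V)))%E]].

End Defs.

(* The sets {V | d(phi, F(V)) > r} are lower Vietoris open: by Hahn-Banach,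
   d(phi, F(V)) is the norm of the restriction of phi to V, so d(phi, F(V)) > r
   iff V meets the open cone {a | r |a| < |phi a|}.  Conversely, let V0 meet an
   open set U at v0 <> 0 (if 0 is in U, every V meets U) and let phi be a norming
   functional for v0: |phi| = 1 and phi v0 = |v0|.  If d(phi, F(V)) > 1 - d, then
   V contains w with |w| <= |v0| and phi w > (1 - d) |v0|, so |v0 + w| > (2 - d) |v0|
   and the convexity defect 2|v0|^2 + 2|w|^2 - |v0 + w|^2 is below 4 d |v0|^2.  By
   local uniform convexity w is then close to v0, hence in U, once d is small:
   {V | d(phi, F(V)) > 1 - d} is a neighbourhood of V0 contained in {V | V meets U}. *)

From HB Require Import structures.
From mathcomp Require Import all_boot all_order all_algebra.
From mathcomp Require Import complex.
From mathcomp Require Import all_classical all_reals all_analysis.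
From mathcomp Require Import ring lra.
Import numFieldTopology.Exports numFieldNormedType.Exports.
Import Order.TTheory GRing.Theory Num.Theory.

Set Implicit Arguments.
Unset Strict Implicit.
Unset Printing Implicit Defensive.
Local Open Scope classical_set_scope.
Local Open Scope ring_scope.

Section RealNorm.
Variable R : realType.
Local Notation C := R[i].

Definition rnorm {V : normedZmodType C} (x : V) : R := complex.Re `|x|.

Lemma normE (V : normedZmodType C) (x : V) : `|x| = (rnorm x)%:C%C.
Proof. by rewrite /rnorm RRe_real // ger0_real. Qed.

Lemma rnorm_ge0 (V : normedZmodType C) (x : V) : 0 <= rnorm x.
Proof. by have := normr_ge0 x; rewrite normE ler0c. Qed.

Lemma ler_rnormD (V : normedZmodType C) (x y : V) : rnorm (x + y) <= rnorm x + rnorm y.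
Proof. by have := ler_normD x y; rewrite !normE -rmorphD lecR. Qed.

Lemma rnormN (V : normedZmodType C) (x : V) : rnorm (- x) = rnorm x.
Proof. by rewrite /rnorm normrN. Qed.

Lemma rnorm0 (V : normedZmodType C) : rnorm (0 : V) = 0.
Proof. by rewrite /rnorm normr0. Qed.

Lemma rnorm_eq0 (V : normedZmodType C) (x : V) : (rnorm x == 0) = (x == 0).
Proof. by rewrite -[RHS]normr_eq0 normE -(rmorph0 (real_complex R)) (inj_eq (@complexI R)). Qed.

Lemma rnorm_gt0 (V : normedZmodType C) (x : V) : (0 < rnorm x) = (x != 0).
Proof. by rewrite lt_neqAle rnorm_ge0 andbT eq_sym rnorm_eq0. Qed.

Lemma rnormZ (V : normedModType C) (k : C) (x : V) : rnorm (k *: x) = rnorm k * rnorm x.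
Proof. by apply: complexI; rewrite -normE normrZ !normE -rmorphM. Qed.

Lemma rnormM (x y : C) : rnorm (x * y) = rnorm x * rnorm y.
Proof. by apply: complexI; rewrite -normE normrM !normE -rmorphM. Qed.

Lemma rnormC (a : R) : rnorm (a%:C%C : C) = `|a|.
Proof. by rewrite /rnorm normc_def /= expr0n /= addr0 sqrtr_sqr. Qed.

Lemma rnorm_ltE (V : normedZmodType C) (x : V) (e : C) : 0 < e ->
  (`|x| < e) = (rnorm x < complex.Re e).
Proof. by move=> e0; rewrite normE ltcE /= (ger0_Im (ltW e0)) eqxx. Qed.

Lemma rnorm_leE (V : normedZmodType C) (x : V) (e : C) : 0 <= e ->
  (`|x| <= e) = (rnorm x <= complex.Re e).
Proof. by move=> e0; rewrite normE lecE /= (ger0_Im e0) eqxx. Qed.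

Lemma Re_le_rnorm (z : C) : complex.Re z <= rnorm z.
Proof.
have := normc_ge_Re z; rewrite normE lecR => h.
exact: le_trans (ler_norm _) h.
Qed.

Lemma exists_unit_mul_rnorm (z : C) : exists a : C, rnorm a = 1 /\ a * z = (rnorm z)%:C%C.
Proof.
have [->|z0] := eqVneq z 0; first by exists 1; rewrite rnorm0 mulr0 /rnorm normr1.
have nz0 : rnorm z != 0 by rewrite rnorm_eq0.
exists ((z^*)%C * ((rnorm z)^-1)%:C%C); split.
  by rewrite rnormM {1}/rnorm normcJ -/(rnorm z) rnormC ger0_norm ?invr_ge0 ?rnorm_ge0 ?mulfV.
rewrite mulrAC -[X in X * _]mulrC -(sqr_normc z) normE.
by rewrite expr2 -mulrA -rmorphM mulfV // mulr1.
Qed.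

Lemma continuous_rnormP (T : topologicalType) (V : normedModType C) (f : T -> V) x :
  (forall e : R, 0 < e -> \forall y \near x, rnorm (f x - f y) < e) ->
  {for x, continuous f}.
Proof.
move=> H; apply/cvgrPdist_lt => e e0.
have eR : 0 < complex.Re e by move: e0; rewrite ltcE => /andP[].
by apply: filterS (H _ eR) => y; rewrite rnorm_ltE.
Qed.

Lemma near_rnorm_lt (T : topologicalType) (V : normedModType C) (f : T -> V) x (e : R) :
  {for x, continuous f} -> 0 < e -> \forall y \near x, rnorm (f x - f y) < e.
Proof.
move=> fx e0; have eC : (0 : C) < e%:C%C by rewrite ltcR.
by apply: filterS (@cvgr_dist_lt _ _ _ (nbhs x) _ f _ fx _ eC) => y; rewrite rnorm_ltE.
Qed.

End RealNorm.

Section RealHahnBanach.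
Variables (R : realType) (A : normedModType R[i]) (c : R).
Hypothesis c_ge0 : 0 <= c.

Lemma scale_realCK (s : R) (x : A) : s != 0 -> s%:C%C *: ((s^-1)%:C%C *: x) = x.
Proof. by move=> s0; rewrite scalerA -rmorphM mulfV // rmorph1 scale1r. Qed.

Lemma rnormZ_gt0 (s : R) (x : A) : 0 < s -> rnorm (s%:C%C *: x) = s * rnorm x.
Proof. by move=> s0; rewrite rnormZ rnormC gtr0_norm. Qed.

(* Partial functionals are encoded by their graphs, so that Zorn's lemma applies. *)
Definition bounded_rgraph (G : set (A * R)) : Prop :=
 [/\ G (0, 0),
   (forall x y a b, G (x, a) -> G (y, b) -> G (x + y, a + b)),
   (forall (r : R) x a, G (x, a) -> G (r%:C%C *: x, r * a)),
   (forall x a b, G (x, a) -> G (x, b) -> a = b) &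
   (forall x a, G (x, a) -> a <= c * rnorm x)].

Lemma bounded_rgraphN G x a : bounded_rgraph G -> G (x, a) -> G (- x, - a).
Proof.
case=> _ _ Gsc _ _ /(Gsc (-1)).
by rewrite rmorphN rmorph1 scaleN1r mulN1r.
Qed.

Definition graph_ext (G : set (A * R)) x0 t0 : set (A * R) :=
  [set p | exists d b (s : R), G (d, b) /\ p = (d + s%:C%C *: x0, b + s * t0)].

Lemma graph_ext_sub G x0 t0 : G `<=` graph_ext G x0 t0.
Proof.
case=> d b Gdb; exists d, b, 0; split => //.
by rewrite rmorph0 scale0r addr0 mul0r addr0.
Qed.

Lemma extension_value G x0 : bounded_rgraph G -> exists t0, forall d b, G (d, b) ->
  b - c * rnorm (d - x0) <= t0 /\ t0 <= c * rnorm (d + x0) - b.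
Proof.
move=> [G0 Gadd _ _ Gb].
pose L := [set y | exists d b, G (d, b) /\ y = b - c * rnorm (d - x0)].
have ubL d' b' : G (d', b') -> ubound L (c * rnorm (d' + x0) - b').
  move=> Gd' y [d [b [Gdb ->]]].
  have := Gb _ _ (Gadd _ _ _ _ Gdb Gd').
  have : rnorm (d + d') <= rnorm (d - x0) + rnorm (d' + x0).
    by have := ler_rnormD (d - x0) (d' + x0); rewrite (addrC d' x0) addrA subrK.
  move=> /(ler_wpM2l c_ge0); lra.
have L0 : L !=set0 by exists (0 - c * rnorm (0 - x0)), 0, 0.
have Lub : has_ubound L by exists (c * rnorm (0 + x0) - 0); exact: ubL.
exists (sup L) => d b Gdb; split; first by apply: ub_le_sup => //; exists d, b.
by apply: ge_sup => //; exact: ubL.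
Qed.

Lemma graph_ext_functional G x0 t0 : bounded_rgraph G -> ~ (exists a, G (x0, a)) ->
  forall x a b, graph_ext G x0 t0 (x, a) -> graph_ext G x0 t0 (x, b) -> a = b.
Proof.
move=> rG nx0 x _ _ [d1 [b1 [s1 [G1 [-> ->]]]]] [d2 [b2 [s2 [G2 [E ->]]]]].
have [_ Gadd Gsc Gfun _] := rG.
have [es|s12] := eqVneq s1 s2.
  by move: E; rewrite es => /addIr ed; rewrite ed in G1 *; rewrite (Gfun _ _ _ G1 G2).
exfalso; apply: nx0; exists ((s1 - s2)^-1 * (b2 - b1)).
have -> : x0 = ((s1 - s2)^-1)%:C%C *: (d2 - d1).
  apply: (@scalerI _ _ (s1 - s2)%:C%C); first by rewrite fmorph_eq0 subr_eq0.
  rewrite scale_realCK ?subr_eq0 // rmorphB scalerBl.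
  by apply/eqP; rewrite eq_sym subr_eq addrC addrA E addrK.
exact/Gsc/Gadd/(bounded_rgraphN rG).
Qed.

Lemma graph_ext_bound G x0 t0 : bounded_rgraph G ->
  (forall d b, G (d, b) -> b - c * rnorm (d - x0) <= t0 /\ t0 <= c * rnorm (d + x0) - b) ->
  forall x a, graph_ext G x0 t0 (x, a) -> a <= c * rnorm x.
Proof.
move=> [_ _ Gsc _ Gb] T _ _ [d [b [s [Gdb [-> ->]]]]].
(* Rescaling a graph point by [1/s] turns the bounds on [t0] into bounds on [s t0]. *)
have scaled (s' : R) : 0 < s' ->
    b - c * rnorm (d - s'%:C%C *: x0) <= s' * t0 /\
    s' * t0 <= c * rnorm (d + s'%:C%C *: x0) - b.
  move=> s'0; have s'n0 : s' != 0 by rewrite gt_eqF.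
  have [T1 T2] := T _ _ (Gsc (s'^-1) _ _ Gdb).
  have e y : rnorm (d + s'%:C%C *: y) = s' * rnorm ((s'^-1)%:C%C *: d + y).
    by rewrite -rnormZ_gt0 // scalerDr scale_realCK.
  rewrite -[- (_ *: x0)]scalerN !e.
  have := ler_wpM2l (ltW s'0) T1; have := ler_wpM2l (ltW s'0) T2.
  rewrite !mulrBr !mulrA mulfV // !mul1r (mulrC s' c); lra.
have [->|sn0] := eqVneq s 0.
  by rewrite rmorph0 scale0r addr0 mul0r addr0; exact: Gb.
have [sp|sn] := ltrP 0 s; first by have [_] := scaled _ sp; lra.
have sl : 0 < - s by rewrite oppr_gt0 lt_neqAle sn0 sn.
have [h _] := scaled _ sl; move: h.
by rewrite rmorphN scaleNr opprK mulNr; lra.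
Qed.

Lemma bounded_rgraph_ext G x0 : bounded_rgraph G -> ~ (exists a, G (x0, a)) ->
  exists t0, bounded_rgraph (graph_ext G x0 t0).
Proof.
move=> rG nx0; have [t0 T] := extension_value x0 rG.
have [G0 Gadd Gsc _ _] := rG.
exists t0; split.
- exact: graph_ext_sub.
- move=> _ _ _ _ [d1 [b1 [s1 [G1 [-> ->]]]]] [d2 [b2 [s2 [G2 [-> ->]]]]].
  exists (d1 + d2), (b1 + b2), (s1 + s2); split; first exact: Gadd.
  by rewrite rmorphD scalerDl mulrDl; congr (_, _); rewrite addrACA.
- move=> r _ _ [d [b [s [Gdb [-> ->]]]]].
  exists (r%:C%C *: d), (r * b), (r * s); split; first exact: Gsc.
  by rewrite scalerDr scalerA -rmorphM mulrDr mulrA.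
- exact: graph_ext_functional.
- exact: graph_ext_bound.
Qed.

Lemma bounded_rgraph_bigcup (F : set (set (A * R))) : (exists2 X, F X & X !=set0) ->
  (forall X, F X -> X !=set0 -> bounded_rgraph X) -> total_on F subset ->
  bounded_rgraph (\bigcup_(X in F) X).
Proof.
move=> [X0 FX0 X0n] FG Ftot.
have common X1 X2 : F X1 -> F X2 -> exists2 X, F X & X1 `<=` X /\ X2 `<=` X.
  by move=> F1 F2; case: (Ftot _ _ F1 F2) => sub; [exists X2 | exists X1] => //; split.
split.
- by exists X0 => //; have [] := FG _ FX0 X0n.
- move=> x y a b [X1 F1 H1] [X2 F2 H2]; have [X FX [s1 s2]] := common _ _ F1 F2.
  exists X => //; have [_ Gadd _ _ _] := FG _ FX (ex_intro _ _ (s1 _ H1)).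
  exact: Gadd (s1 _ H1) (s2 _ H2).
- move=> r x a [X FX H]; exists X => //.
  by have [_ _ Gsc _ _] := FG _ FX (ex_intro _ _ H); exact: Gsc.
- move=> x a b [X1 F1 H1] [X2 F2 H2]; have [X FX [s1 s2]] := common _ _ F1 F2.
  have [_ _ _ Gfun _] := FG _ FX (ex_intro _ _ (s1 _ H1)).
  exact: Gfun (s1 _ H1) (s2 _ H2).
- move=> x a [X FX H].
  by have [_ _ _ _ Gb] := FG _ FX (ex_intro _ _ H); exact: Gb.
Qed.

Lemma real_hahn_banach (G0 : set (A * R)) : bounded_rgraph G0 -> exists u : A -> R,
  [/\ (forall x a, G0 (x, a) -> u x = a),
      (forall x y, u (x + y) = u x + u y),
      (forall (r : R) x, u (r%:C%C *: x) = r * u x) &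
      (forall x, u x <= c * rnorm x)].
Proof.
move=> rG0.
(* [set0] is admitted so that the union of the empty chain is an admissible graph. *)
pose P G := G = set0 \/ (bounded_rgraph G /\ G0 `<=` G).
have [M [PM Mmax]] : exists M, P M /\ forall B, M `<` B -> ~ P B.
  apply: Zorn_bigcup => F FP Ftot.
  have [[X [p [FX Xp]]]|nex] := pselect (exists X p, F X /\ X p); last first.
    by left; apply/seteqP; split => // q [X FX Xq]; apply: nex; exists X, q.
  have good Y q : F Y -> Y q -> bounded_rgraph Y /\ G0 `<=` Y.
    by move=> FY Yq; case: (FP _ FY) => // Y0; rewrite Y0 in Yq.
  right; split.
    apply: bounded_rgraph_bigcup => //; first by exists X => //; exists p.
    by move=> Y FY [q Yq]; have [] := good Y q FY Yq.
  by move=> q Gq; exists X => //; have [_] := good X p FX Xp; apply.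
have [rM G0M] : bounded_rgraph M /\ G0 `<=` M.
  case: PM => // M0; exfalso; apply: (Mmax G0); last by right; split.
  rewrite M0; split; first exact: sub0set.
  by move=> /(_ (0, 0)); case: rG0 => h _ _ _ _ /(_ h).
have total x : exists a, M (x, a).
  apply: contrapT => nx; have [t0 rE] := bounded_rgraph_ext rM nx.
  apply: (Mmax (graph_ext M x t0)); last first.
    by right; split => //; apply: subset_trans G0M (@graph_ext_sub _ _ _).
  split; first exact: graph_ext_sub.
  move=> /(_ (x, t0)) H; apply: nx; exists t0; apply: H.
  by exists 0, 0, 1; split; [case: rM | rewrite rmorph1 scale1r !add0r mul1r].
have [u hu] := choice total; have [_ Madd Msc Mfun Mb] := rM.
exists u; split.
- by move=> x a /G0M; exact: Mfun (hu x).
- by move=> x y; apply: Mfun (hu (x + y)) (Madd _ _ _ _ (hu x) (hu y)).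
- by move=> r x; apply: Mfun (hu _) (Msc _ _ _ (hu x)).
- by move=> x; exact: Mb (hu x).
Qed.

End RealHahnBanach.

Section ComplexHahnBanach.
Variables (R : realType) (A : normedModType R[i]).
Local Notation C := R[i].

Definition bounded_cgraph (c : R) (G : set (A * C)) : Prop :=
 [/\ G (0, 0),
   (forall x y a b, G (x, a) -> G (y, b) -> G (x + y, a + b)),
   (forall (k : C) x z, G (x, z) -> G (k *: x, k * z)),
   (forall x a b, G (x, a) -> G (x, b) -> a = b) &
   (forall x z, G (x, z) -> rnorm z <= c * rnorm x)].

Lemma complex_Re_decomp (w : C) : w = (complex.Re w)%:C%C - 'i%C * (complex.Re (w * 'i%C))%:C%C.
Proof. by rewrite ReiNIm rmorphN mulrN opprK -complexE. Qed.

Lemma bounded_additive_continuous (W : normedModType C) (f : A -> W) (c : R) :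
  {morph f : x y / x + y} -> (forall x, rnorm (f x) <= c * rnorm x) -> continuous f.
Proof.
move=> fD fb x; apply: continuous_rnormP => e e0.
have c1 : 0 < `|c| + 1 by rewrite ltr_pwDr.
near=> y.
have : rnorm (x - y) < e / (`|c| + 1).
  by near: y; apply: near_rnorm_lt => //; rewrite divr_gt0.
rewrite ltr_pdivlMr // => hxy.
have fB : f x - f y = f (x - y) by apply/eqP; rewrite subr_eq -fD subrK.
rewrite fB; apply: le_lt_trans (fb _) _; apply: le_lt_trans hxy.
rewrite mulrDr mulr1 -[c * _]mulrC; apply: ler_wpDr; first exact: rnorm_ge0.
by rewrite ler_wpM2l ?rnorm_ge0 // real_ler_norm // num_real.
Unshelve. all: by end_near.
Qed.

Definition complexification (u : A -> R) : A -> C :=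
  fun x => (u x)%:C%C - 'i%C * (u ('i%C *: x))%:C%C.

Section Complexification.
Variables (u : A -> R) (c : R).
Hypothesis uD : forall x y, u (x + y) = u x + u y.
Hypothesis uZ : forall (r : R) x, u (r%:C%C *: x) = r * u x.
Hypothesis u_le : forall x, u x <= c * rnorm x.
Local Notation psi := (complexification u).

Lemma Re_complexification x : complex.Re (psi x) = u x.
Proof. by rewrite /= mul0r mulr0 !subr0. Qed.

Lemma complexificationD x y : psi (x + y) = psi x + psi y.
Proof. by rewrite /complexification scalerDr !uD !rmorphD; ring. Qed.

Lemma complexificationZ (k : C) x : psi (k *: x) = k * psi x.
Proof.
have uN y : u (- y) = - u y by have := uZ (-1) y; rewrite rmorphN1 scaleN1r mulN1r.
have psiR (r : R) y : psi (r%:C%C *: y) = r%:C%C * psi y.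
  rewrite /complexification.
  have -> : 'i%C *: (r%:C%C *: y) = r%:C%C *: ('i%C *: y) by rewrite !scalerA mulrC.
  by rewrite !uZ !rmorphM; ring.
have psiI y : psi ('i%C *: y) = 'i%C * psi y.
  rewrite /complexification scalerA -expr2 sqr_i scaleN1r uN rmorphN.
  by rewrite mulrBr mulrA -expr2 sqr_i; ring.
by rewrite [k]complexE scalerDl -scalerA complexificationD psiI !psiR; ring.
Qed.

(* A complex-linear functional has the same norm as its real part: rotate [x]. *)
Lemma rnorm_complexification_le x : rnorm (psi x) <= c * rnorm x.
Proof.
have [a [a1 ha]] := exists_unit_mul_rnorm (psi x).
have <- : complex.Re (psi (a *: x)) = rnorm (psi x) by rewrite complexificationZ ha.
by rewrite Re_complexification; apply: le_trans (u_le _) _; rewrite rnormZ a1 mul1r.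
Qed.

Lemma complexification_is_dual : is_dual psi.
Proof.
split; first exact: complexificationD.
split; first exact: complexificationZ.
apply: (bounded_additive_continuous (c := c)) => [x y|x].
  exact: complexificationD.
exact: rnorm_complexification_le.
Qed.

End Complexification.

Lemma hahn_banach (c : R) (G0 : set (A * C)) : 0 <= c -> bounded_cgraph c G0 ->
  exists psi : A -> Cx R, [/\ is_dual psi, (forall x z, G0 (x, z) -> psi x = z) &
    (forall x, rnorm (psi x : C) <= c * rnorm x)].
Proof.
move=> c0 [G00 Gadd Gsc Gfun Gb].
pose G0r := [set p : A * R | exists z, G0 (p.1, z) /\ p.2 = complex.Re z].
have rG : bounded_rgraph c G0r.
  split.
  - by exists 0.
  - move=> x y a b [z1 [h1 /= ->]] [z2 [h2 /= ->]].
    by exists (z1 + z2); split; [exact: Gadd | rewrite raddfD].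
  - move=> r x a [z [h /= ->]].
    by exists (r%:C%C * z); split; [exact: Gsc | case: (z) => ? ? /=; rewrite mul0r subr0].
  - by move=> x a b [z1 [h1 /= ->]] [z2 [h2 /= ->]]; rewrite (Gfun _ _ _ h1 h2).
  - by move=> x a [z [h /= ->]]; exact: le_trans (Re_le_rnorm z) (Gb _ _ h).
have [u [uext uD uZ u_le]] := real_hahn_banach c0 rG.
exists (complexification u); split.
- exact: complexification_is_dual u_le.
- move=> x z Gxz; rewrite [RHS]complex_Re_decomp /complexification.
  rewrite (uext _ (complex.Re z)); last by exists z.
  rewrite (uext _ (complex.Re (z * 'i%C))) //.
  by exists ('i%C * z); rewrite mulrC; split => //; exact: Gsc.
- exact: rnorm_complexification_le.
Qed.

End ComplexHahnBanach.

Section DualDistance.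
Variables (R : realType) (A : normedModType R[i]).
Local Notation C := R[i].

Definition linear_subspace (V : set A) : Prop :=
  V 0 /\ (forall u v, V u -> V v -> V (u + v)) /\ (forall (k : C) u, V u -> V (k *: u)).

Lemma closed_subspace_linear (V : set A) : closed_subspace V -> linear_subspace V.
Proof. by case. Qed.

Lemma dual0 (phi : A -> Cx R) : is_dual phi -> phi 0 = 0.
Proof. by case=> _ [phiZ _]; have := phiZ 0 0; rewrite scale0r mul0r. Qed.

Lemma rnorm_le1 (a : A) : (`|a| <= 1) = (rnorm a <= 1).
Proof. by rewrite rnorm_leE ?ler01. Qed.

Lemma dual_norm_ge (phi : A -> Cx R) a : rnorm a <= 1 ->
  ((rnorm (phi a : C))%:E <= dual_norm phi)%E.
Proof. by move=> a1; apply: ereal_sup_ubound; exists a => //=; rewrite rnorm_le1. Qed.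

Lemma dual_norm_le (phi : A -> Cx R) c : 0 <= c ->
  (forall a, rnorm (phi a : C) <= c * rnorm a) -> (dual_norm phi <= c%:E)%E.
Proof.
move=> c0 phib; apply: ge_ereal_sup => _ [a /= a1 <-]; rewrite lee_fin.
move: a1; rewrite rnorm_le1 => a1.
by apply: le_trans (phib a) _; rewrite -[leRHS]mulr1 ler_wpM2l.
Qed.

Lemma dual_dist_annihilator_ge (phi : A -> Cx R) (V : set A) v : V v -> rnorm v <= 1 ->
  ((rnorm (phi v : C))%:E <= dual_dist phi (annihilator V))%E.
Proof.
move=> Vv v1; apply/ereal_infP => _ [psi [_ psiV] <-].
by have := dual_norm_ge (fun a => phi a - psi a) v1; rewrite /= psiV // subr0.
Qed.

(* The extension [psi] of [phi] restricted to [V] given by Hahn-Banach makes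
   [phi - psi] an element of the annihilator at distance at most [r]. *)
Lemma dual_dist_annihilator_le (phi : A -> Cx R) (V : set A) (r : R) :
  is_dual phi -> linear_subspace V -> 0 <= r ->
  (forall v, V v -> rnorm v <= 1 -> rnorm (phi v : C) <= r) ->
  (dual_dist phi (annihilator V) <= r%:E)%E.
Proof.
move=> dphi [V0 [VD VZ]] r0 phib.
have [phD [phZ phC]] := dphi.
have phib' v : V v -> rnorm (phi v : C) <= r * rnorm v.
  move=> Vv; have [->|v0] := eqVneq v 0; first by rewrite dual0 // !rnorm0 mulr0.
  have s0 : 0 < rnorm v by rewrite rnorm_gt0.
  have := phib _ (VZ ((rnorm v)^-1)%:C%C _ Vv).
  rewrite phZ rnormM !rnormZ rnormC gtr0_norm ?invr_gt0 // mulVf ?gt_eqF //.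
  by rewrite ler_pdivrMl // mulrC; apply.
pose G0 := [set p : A * C | V p.1 /\ p.2 = phi p.1].
have cG : bounded_cgraph r G0.
  split.
  - by split => //=; rewrite dual0.
  - by move=> x y a b [/= Vx ->] [/= Vy ->]; split => /=; [exact: VD | rewrite phD].
  - by move=> k x z [/= Vx ->]; split => /=; [exact: VZ | rewrite phZ].
  - by move=> x a b [_ /= ->] [_ /= ->].
  - by move=> x z [/= Vx ->]; exact: phib'.
have [psi [[psD [psZ psC]] psext psb]] := hahn_banach r0 cG.
apply: ge_ereal_inf; exists (dual_norm (fun a => phi a - (phi a - psi a))).
  exists (fun a => phi a - psi a); last by [].
  split.
    split; first by move=> a b; rewrite phD psD addrACA opprD.
    split; first by move=> k a; rewrite phZ psZ mulrBr.
    by move=> x; apply: continuousB; [exact: phC | exact: psC].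
  by move=> v Vv; rewrite (psext v (phi v)) ?subrr.
by apply: dual_norm_le => // a; rewrite opprB addrCA subrr addr0; exact: psb.
Qed.

Lemma dual_dist_annihilator_gtP (phi : A -> Cx R) (V : set A) (r : R) :
  is_dual phi -> linear_subspace V -> 0 <= r ->
  (r%:E < dual_dist phi (annihilator V))%E <->
  exists v, [/\ V v, rnorm v <= 1 & r < rnorm (phi v : C)].
Proof.
move=> dphi sV r0; split => [rd|[v [Vv v1 rv]]]; last first.
  by apply: lt_le_trans (dual_dist_annihilator_ge phi Vv v1); rewrite lte_fin.
apply: contrapT => nv; move: rd; apply/negP; rewrite -leNgt.
apply: dual_dist_annihilator_le => // v Vv v1; rewrite leNgt; apply/negP => rv.
by apply: nv; exists v.
Qed.

Lemma subspace_dual_gtP (phi : A -> Cx R) (V : set A) (r : R) :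
  is_dual phi -> linear_subspace V -> 0 <= r ->
  (exists v, V v /\ r * rnorm v < rnorm (phi v : C)) <->
  exists v, [/\ V v, rnorm v <= 1 & r < rnorm (phi v : C)].
Proof.
move=> dphi [_ [_ VZ]] r0; split => [[v [Vv rv]]|[v [Vv v1 rv]]].
  have [v0|v0] := eqVneq v 0.
    by move: rv; rewrite v0 dual0 // !rnorm0 mulr0 ltxx.
  have s0 : 0 < rnorm v by rewrite rnorm_gt0.
  exists (((rnorm v)^-1)%:C%C *: v); split; first exact: VZ.
    by rewrite rnormZ rnormC gtr0_norm ?invr_gt0 // mulVf ?gt_eqF.
  have [_ [phZ _]] := dphi.
  by rewrite phZ rnormM rnormC gtr0_norm ?invr_gt0 // ltr_pdivlMl // mulrC.
exists v; split => //; apply: le_lt_trans rv.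
by rewrite -[leRHS]mulr1 ler_wpM2l.
Qed.

Lemma norming_functional (v0 : A) : exists phi : A -> Cx R,
  [/\ is_dual phi, phi v0 = (rnorm v0)%:C%C & forall x, rnorm (phi x : C) <= rnorm x].
Proof.
pose m := rnorm v0.
pose G0 := [set p : A * C | exists k : C, p = (k *: v0, k * m%:C%C)].
have cG : bounded_cgraph 1 G0.
  split.
  - by exists 0; rewrite scale0r mul0r.
  - move=> x y a b [k1 [-> ->]] [k2 [-> ->]].
    by exists (k1 + k2); rewrite scalerDl mulrDl.
  - move=> k x z [k1 [-> ->]].
    by exists (k * k1); rewrite scalerA mulrA.
  - move=> x a b [k1 [E1 ->]] [k2 [E2 ->]].
    apply/eqP; rewrite -subr_eq0 -mulrBl -rnorm_eq0 rnormM rnormC ger0_norm ?rnorm_ge0 //.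
    by rewrite -rnormZ scalerBl -E1 -E2 subrr rnorm0.
  - move=> x z [k [-> ->]].
    by rewrite rnormM rnormC rnormZ mul1r ger0_norm ?rnorm_ge0.
have [phi [dphi phext phb]] := hahn_banach ler01 cG.
exists phi; split => // [|x]; last by rewrite -[leRHS]mul1r.
by apply: phext; exists 1; rewrite scale1r mul1r.
Qed.

Lemma open_dual_gt (phi : A -> Cx R) (r : R) : continuous phi -> 0 <= r ->
  open [set a | r * rnorm a < rnorm (phi a : C)].
Proof.
move=> phC r0; rewrite openE => a /= ha.
pose g := rnorm (phi a : C) - r * rnorm a.
have g0 : 0 < g by rewrite subr_gt0.
have r1 : 0 < 2 * (r + 1) by rewrite mulr_gt0 // ltr_pwDr.
rewrite /interior; near=> x.
have h1 : rnorm ((phi a : C) - phi x) < g / 2.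
  by near: x; apply: (@near_rnorm_lt R _ _ phi a _ (phC a)); rewrite divr_gt0.
have h2 : rnorm (a - x) < g / (2 * (r + 1)).
  by near: x; apply: (@near_rnorm_lt R _ _ id a); rewrite ?divr_gt0.
move: h1 h2; rewrite !ltr_pdivlMr // => h1 h2.
have t1 := ler_rnormD ((phi a : C) - phi x) (phi x); rewrite subrK in t1.
have t2 := ler_rnormD a (x - a); rewrite addrC subrK -opprB rnormN in t2.
have t3 := ler_wpM2l r0 t2; rewrite mulrDr in t3.
have t4 : 2 * (r * rnorm (a - x)) <= g.
  by apply: le_trans (ltW h2); have := rnorm_ge0 (a - x); nra.
rewrite /g in h1 t4 *; rewrite /=; lra.
Unshelve. all: by end_near.
Qed.

End DualDistance.

Section LocallyUniformlyConvex.
Variables (R : realType) (A : normedModType R[i]).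
Local Notation C := R[i].

Definition convexity_defect (a u : A) : R :=
  2 * rnorm a ^+ 2 + 2 * rnorm u ^+ 2 - rnorm (a + u) ^+ 2.

Lemma convexity_defect_ge0 (a u : A) : 0 <= convexity_defect a u.
Proof.
have s0 := rnorm_ge0 (a + u); have sD := ler_rnormD a u.
have := ler_pM s0 s0 sD sD; have := sqr_ge0 (rnorm a - rnorm u).
rewrite /convexity_defect !expr2; nra.
Qed.

Lemma convexity_defect_lt (a u : A) (e : R) : 0 < rnorm a -> 0 <= e <= 2 ->
  rnorm u <= rnorm a -> rnorm a * (2 - e) < rnorm (a + u) ->
  convexity_defect a u < 4 * rnorm a ^+ 2 * e.
Proof.
move=> a0 /andP[e0 e2] ua au; rewrite /convexity_defect.
have ae0 : 0 <= rnorm a * (2 - e) by rewrite mulr_ge0 ?subr_ge0 // ltW.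
have sq_au := ltr_pM ae0 ae0 au au.
have sq_ua := ler_pM (rnorm_ge0 u) (rnorm_ge0 u) ua ua.
have := sqr_ge0 (rnorm a * e).
rewrite !expr2; nra.
Qed.

Lemma luc_modulus (a : A) (eps : R) : locally_uniformly_convex A -> 0 < eps ->
  exists2 k : R, 0 < k & forall u, convexity_defect a u < k -> rnorm (a - u) < eps.
Proof.
move=> luc eps0; apply: contrapT => nk.
(* Otherwise some [u n] has defect below [1/(n+1)] but stays [eps] away from [a]. *)
have /choice [u hu] (n : nat) : exists u,
    convexity_defect a u < n.+1%:R^-1 /\ eps <= rnorm (a - u).
  apply: contrapT => nu; apply: nk; exists n.+1%:R^-1 => // v dv.
  by rewrite ltNge; apply/negP => ev; apply: nu; exists v.
have defect_cvg : (fun n => (2 * `|a| ^+ 2 + 2 * `|u n| ^+ 2 - `|a + u n| ^+ 2 : Cx R))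
    @ \oo --> (0 : Cx R).
  have -> : (fun n => (2 * `|a| ^+ 2 + 2 * `|u n| ^+ 2 - `|a + u n| ^+ 2 : Cx R))
      = fun n => (convexity_defect a (u n))%:C%C.
    apply: funext => n; rewrite /convexity_defect !normE.
    by rewrite !expr2 rmorphB rmorphD !rmorphM rmorph_nat.
  apply/cvgrPdist_lt => e e0.
  have eR : 0 < complex.Re e by move: e0; rewrite ltcE => /andP[].
  near=> n.
  rewrite rnorm_ltE // sub0r rnormN rnormC ger0_norm ?convexity_defect_ge0 //.
  apply: lt_trans (proj1 (hu n)) _.
  by near: n; exact: (near_infty_natSinv_lt (PosNum eR)).
have epsC : (0 : C) < eps%:C%C by rewrite ltcR.
have [N _ HN] := @cvgr_dist_lt _ _ _ _ _ _ _ (luc a u defect_cvg) _ epsC.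
have := HN N (leqnn N); rewrite /= sub0r normrN normr_id rnorm_ltE //=.
by rewrite ltNge (proj2 (hu N)).
Unshelve. all: by end_near.
Qed.

End LocallyUniformlyConvex.

Section GeneratedTopology.
Variable T : Type.

Lemma generated_topology_sub (S : set (set T)) : S `<=` generated_topology S.
Proof. by move=> X SX O _; apply. Qed.

Lemma generated_topology_is_topology (S : set (set T)) : is_topology (generated_topology S).
Proof.
split; first by move=> O [].
split.
  move=> U V gU gV O tO SO; have [_ [OI _]] := tO.
  by apply: OI; [apply: gU | apply: gV].
by move=> F FS O tO SO; case: (tO) => _ [_ OU]; apply: OU => U /FS; apply.
Qed.

Lemma generated_topology_subset (S1 S2 : set (set T)) :
  S1 `<=` generated_topology S2 -> generated_topology S1 `<=` generated_topology S2.
Proof.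
move=> S12 U gU; apply: gU; first exact: generated_topology_is_topology.
by move=> X /S12.
Qed.

Lemma generated_topology_local (S : set (set T)) (X : set T) :
  (forall x, X x -> exists Y, [/\ generated_topology S Y, Y x & Y `<=` X]) ->
  generated_topology S X.
Proof.
move=> loc.
have -> : X = \bigcup_(Y in [set Y | generated_topology S Y /\ Y `<=` X]) Y.
  apply/seteqP; split => [x /loc [Y [gY Yx YX]]|x [Y [_ YX] /YX //]].
  by exists Y.
have [_ [_ gU]] := generated_topology_is_topology S.
by apply: gU => Y [].
Qed.

End GeneratedTopology.

Section Separation.
Variables (R : realType) (A : normedModType R[i]).
Local Notation C := R[i].

Lemma luc_dual_dist_separation (v0 : A) (e : R) : locally_uniformly_convex A ->
  v0 != 0 -> 0 < e -> exists (phi : A -> Cx R) (r : R), [/\ is_dual phi, 0 < r,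
    (forall V, linear_subspace V -> V v0 -> (r%:E < dual_dist phi (annihilator V))%E) &
    (forall V, linear_subspace V -> (r%:E < dual_dist phi (annihilator V))%E ->
       exists2 w, V w & rnorm (v0 - w) < e)].
Proof.
move=> luc v00 e0; pose m := rnorm v0.
have m0 : 0 < m by rewrite rnorm_gt0.
have [k k0 hk] := luc_modulus v0 luc e0.
have [phi [dphi phv0 phb]] := norming_functional v0.
have [phD [phZ _]] := dphi.
(* [d] is small enough that [convexity_defect v0 w < 4 m^2 d <= k]. *)
pose d := Num.min (1 / 2) (k / (4 * m ^+ 2)).
have m2 : 0 < 4 * m ^+ 2 by rewrite mulr_gt0 // exprn_gt0.
have d0 : 0 < d by rewrite lt_min divr_gt0 //= divr_gt0.
have d1 : d <= 1 / 2 by rewrite ge_min lexx.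
have dk : 4 * m ^+ 2 * d <= k.
  by rewrite mulrC -ler_pdivlMr // ge_min lexx orbT.
have r0 : 0 <= 1 - d by lra.
exists phi, (1 - d); split => //; first lra.
- move=> V sV V0; apply/(dual_dist_annihilator_gtP dphi sV r0).
  have [_ [_ VZ]] := sV.
  exists ((m^-1)%:C%C *: v0); split; first exact: VZ.
    by rewrite rnormZ rnormC gtr0_norm ?invr_gt0 // mulVf ?gt_eqF.
  rewrite phZ phv0 -rmorphM mulVf ?gt_eqF // rnormC normr1; lra.
move=> V sV /(dual_dist_annihilator_gtP dphi sV r0) [w [Vw w1 rw]].
have [_ [_ VZ]] := sV.
have [al [al1 hal]] := exists_unit_mul_rnorm (phi w : C).
pose t := rnorm (phi w : C); pose w' := (m%:C%C * al) *: w.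
exists w'; first exact: VZ.
apply: hk; apply: lt_le_trans dk; apply: convexity_defect_lt => //.
- by apply/andP; split; lra.
- rewrite /w' rnormZ rnormM al1 rnormC mulr1 ger0_norm ?rnorm_ge0 //.
  by rewrite -[leRHS]mulr1 ler_wpM2l ?rnorm_ge0.
- have phw' : phi w' = (m * t)%:C%C by rewrite /w' phZ -mulrA hal rmorphM.
  apply: lt_le_trans (phb (v0 + w')).
  rewrite phD phv0 phw' -rmorphD rnormC ger0_norm; last first.
    by rewrite addr_ge0 ?mulr_ge0 ?rnorm_ge0.
  have : m * (1 - d) < m * t by rewrite ltr_pM2l.
  lra.
Qed.

End Separation.

Section VietorisTopology.
Variables (R : realType) (A : normedModType R[i]).
Local Notation C := R[i].

Lemma dual_dist_subbasis_sub_lower_vietoris :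
  @dual_dist_subbasis R A `<=` @lower_vietoris_subbasis R A.
Proof.
move=> _ [phi [r [dphi [r0 ->]]]]; have [_ [_ phC]] := dphi.
exists [set a | r * rnorm a < rnorm (phi a : C)]; split; first exact: open_dual_gt (ltW r0).
apply/seteqP; split => -[V sV] /=.
  move=> /(dual_dist_annihilator_gtP dphi (closed_subspace_linear sV) (ltW r0)).
  by move=> /(subspace_dual_gtP dphi (closed_subspace_linear sV) (ltW r0)) [v []]; exists v.
move=> [v [Vv rv]]; apply/(dual_dist_annihilator_gtP dphi (closed_subspace_linear sV) (ltW r0)).
by apply/(subspace_dual_gtP dphi (closed_subspace_linear sV) (ltW r0)); exists v.
Qed.

Lemma lower_vietoris_subbasis_open : locally_uniformly_convex A ->
  @lower_vietoris_subbasis R A `<=` generated_topology (@dual_dist_subbasis R A).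
Proof.
move=> luc _ [U [oU ->]]; apply: generated_topology_local => V0 [v0 [V0v0 Uv0]].
have [v00|v00] := eqVneq v0 0.
  exists setT; split => //.
    by have [] := generated_topology_is_topology (@dual_dist_subbasis R A).
  by move=> V _; have [_ [V_0 _]] := proj2_sig V; exists 0; split; last rewrite -v00.
move: oU; rewrite openE => /(_ v0 Uv0) /nbhs_ballP [e e0 ballU].
have eR : 0 < complex.Re e by move: e0; rewrite /= ltcE => /andP[].
have [phi [r [dphi r0 nearV0 nearU]]] := luc_dual_dist_separation luc v00 eR.
exists [set V : MaxA A | (r%:E < dual_dist phi (annihilator (proj1_sig V)))%E]; split.
- by apply: generated_topology_sub; exists phi, r.
- by apply: nearV0 => //; apply: closed_subspace_linear (proj2_sig V0).
- move=> [V sV] /= /(nearU _ (closed_subspace_linear sV)) [w Vw wv0].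
  by exists w; split => //; apply: ballU; rewrite -ball_normE /ball_ /= rnorm_ltE.
Qed.

End VietorisTopology.

Theorem lemma7p23 (R : realType) (A : normedModType R[i]) :
  @locally_uniformly_convex R A ->
  generated_topology (@lower_vietoris_subbasis R A) =
  generated_topology (@dual_dist_subbasis R A).
Proof.
move=> luc; apply/seteqP; split; apply: generated_topology_subset.
  exact: lower_vietoris_subbasis_open.
by move=> X /dual_dist_subbasis_sub_lower_vietoris; apply: generated_topology_sub.
Qed.
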